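(* Assume the setting and the nsCRAIG recurrence described in the context, and let $k\ge1$ be such that $Q_k,B_k,H_k,\chi_k$ and $g_k$ (hence $\beta_{k+1}$) are defined, with nsCRAIG iterates $u^{(k)},p^{(k)}$. Then $Mu^{(k)}+Ap^{(k)}=0$ and $b-A^Tu^{(k)}+Cp^{(k)}=-\chi_k\,Ng_k$ (equal to $-\chi_k\beta_{k+1}Nq_{k+1}$ when $\beta_{k+1}>0$); in particular this residual is orthogonal to $q_1,\dots,q_k$ and $\|b-A^Tu^{(k)}+Cp^{(k)}\|_{N^{-1}}=\beta_{k+1}|\chi_k|$, so $\|b-A^Tu^{(k)}+Cp^{(k)}\|_{N^{-1}}/\|b\|_{N^{-1}}=\beta_{k+1}|\chi_k|/\beta_1$.
   Context: Setting: $M\in\mathbb{R}^{m\times m}$ is nonsymmetric and positive definite ($x^TMx>0$ for all $x\ne0$); $A\in\mathbb{R}^{m\times n}$ ($n\le m$) has full column rank; $C\in\mathbb{R}^{n\times n}$ is symmetric positive semidefinite; $b\in\mathbb{R}^n$ is nonzero; $N\in\mathbb{R}^{n\times n}$ is symmetric positive definite. Write $\|x\|_G=(x^TGx)^{1/2}$ for $G$ positive definite (for nonsymmetric $M$ this is the norm of its symmetric part). The generalized saddle point system is $Mu+Ap=0$, $A^Tu-Cp=b$, with unique solution $(u_*,p_* )$; $S=A^TM^{-1}A+C$. nsCRAIG recurrence (exact arithmetic): Initialization: $\beta_1=\|b\|_{N^{-1}}$, $q_1=N^{-1}b/\beta_1$, $Q_1=[q_1]$, $r_1=q_1$, $w_1=M^{-1}Aq_1$,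 $s_1=Cr_1$, $\alpha_1=(w_1^TMw_1+r_1^Ts_1)^{1/2}$, $v_1=w_1/\alpha_1$, $t_1=s_1/\alpha_1$, $\chi_1=\beta_1/\alpha_1$. For $k=1,2,\dots$: $\hat g_k=N^{-1}(A^Tv_k+t_k)$, $h_k=Q_k^TN\hat g_k\in\mathbb{R}^k$, $g_k=\hat g_k-Q_kh_k$, $\beta_{k+1}=\|g_k\|_N$; if $\beta_{k+1}=0$ the recurrence stops; otherwise $q_{k+1}=g_k/\beta_{k+1}$, $Q_{k+1}=[Q_k,q_{k+1}]$, $w_{k+1}=M^{-1}Aq_{k+1}-\beta_{k+1}v_k$, $r_{k+1}=q_{k+1}-(\beta_{k+1}/\alpha_k)r_k$, $s_{k+1}=Cr_{k+1}$, $\alpha_{k+1}=(w_{k+1}^TMw_{k+1}+r_{k+1}^Ts_{k+1})^{1/2}$, $v_{k+1}=w_{k+1}/\alpha_{k+1}$, $t_{k+1}=s_{k+1}/\alpha_{k+1}$, $\chi_{k+1}=-(\beta_{k+1}/\alpha_{k+1})\chi_k$. Matrices: $B_k\in\mathbb{R}^{k\times k}$ upper bidiagonal with $(B_k)_{ii}=\alpha_i$, $(B_k)_{i,i+1}=\beta_{i+1}$; $H_k\in\mathbb{R}^{k\times k}$ upper Hessenberg whose $j$-th column has entries $(H_k)_{ij}=(h_j)_i$ for $i\le j$, $(H_k)_{j+1,j}=\beta_{j+1}$ (if $j<k$), and zeros otherwise. The nsCRAIG iterates at step $k$ are $y_k=-B_k^{-1}H_k^{-1}(\beta_1e_1)$,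 $p^{(k)}=Q_ky_k$, $u^{(k)}=-M^{-1}Ap^{(k)}$, with $e_1$ the first unit vector of $\mathbb{R}^k$. *)

From HB Require Import structures.
From mathcomp Require Import all_boot all_order all_algebra.
Set Implicit Arguments. Unset Strict Implicit. Unset Printing Implicit Defensive.
Import Order.TTheory GRing.Theory Num.Theory.
Local Open Scope ring_scope.

Definition bform (R : rcfType) (p : nat) (G : 'M[R]_p) (x y : 'cV[R]_p) : R :=
  (x^T *m G *m y) ord0 ord0.

Definition Gnorm (R : rcfType) (p : nat) (G : 'M[R]_p) (x : 'cV[R]_p) : R :=
  Num.sqrt (bform G x x).

Definition posdef (R : rcfType) (p : nat) (G : 'M[R]_p) : Prop :=
  forall x : 'cV[R]_p, x != 0 -> 0 < bform G x x.

Definition possemidef (R : rcfType) (p : nat) (G : 'M[R]_p) : Prop :=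
  forall x : 'cV[R]_p, 0 <= bform G x x.

(* Q_k = [q_1, ..., q_k]  (sequences indexed from 1) *)
Definition Qmat (R : rcfType) (n k : nat) (q : nat -> 'cV[R]_n) : 'M[R]_(n, k) :=
  \matrix_(i < n, j < k) q j.+1 i ord0.

(* B_k: upper bidiagonal, (B_k)_{ii} = alpha_i, (B_k)_{i,i+1} = beta_{i+1}
   (1-based in the paper; here 0-based row/column indices) *)
Definition Bmat (R : rcfType) (k : nat) (alpha beta : nat -> R) : 'M[R]_k :=
  \matrix_(i < k, j < k)
    (if (j == i :> nat) then alpha i.+1
     else if (j == i.+1 :> nat) then beta j.+1 else 0).

(* H_k: upper Hessenberg, (H_k)_{ij} = (h_j)_i for i <= j,
   (H_k)_{j+1,j} = beta_{j+1}; h j i denotes (h_j)_i (1-based). *)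
Definition Hmat (R : rcfType) (k : nat) (h : nat -> nat -> R) (beta : nat -> R)
  : 'M[R]_k :=
  \matrix_(i < k, j < k)
    (if (i <= j)%N then h j.+1 i.+1
     else if (i == j.+1 :> nat) then beta j.+2 else 0).

Definition e1 (R : rcfType) (k : nat) : 'cV[R]_k :=
  \col_(i < k) (if (i == 0 :> nat) then 1 else 0).

From HB Require Import structures.
From mathcomp Require Import all_boot all_order all_algebra.
From mathcomp Require Import ring zify.
Import Order.TTheory GRing.Theory Num.Theory.
Set Implicit Arguments. Unset Strict Implicit. Unset Printing Implicit Defensive.
Local Open Scope ring_scope.

(* Collect the recurrence vectors into the matrices V = [v_1 .. v_k],
   T = [t_1 .. t_k] and P = [r_1/alpha_1 .. r_k/alpha_k].  The w-, r- and
   s-recurrences say M^-1 A Q_k = V B_k and C Q_k = T B_k, while the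
   orthogonalisation of ghat_j against q_1 .. q_j is a Gram-Schmidt (Arnoldi)
   process: the q_i are N-orthonormal, N^-1 (A^T V + T) = Q_k H_k + g_k e_k^T
   and g_k is N-orthogonal to q_1 .. q_k.  Hence H_k = Q_k^T (A^T V + T)
   = B_k^T K with K = V^T M^T V + T^T P.  The normalisation of alpha_j makes
   the diagonal of K equal to 1, and comparing the strictly lower parts of
   B_k^T K and of the Hessenberg matrix H_k shows that K is upper triangular.
   So H_k is invertible, and z = H_k^-1 beta_1 e_1 solves
   K z = B_k^-T beta_1 e_1 = (chi_1, .., chi_k)^T, whose last row gives
   e_k^T z = chi_k.  The residual is b - (A^T V + T) z
   = b - N (beta_1 q_1 + chi_k g_k) = - chi_k N g_k. *)

Lemma range1_cases (j k : nat) :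
  (1 <= j <= k)%N -> j = 1%N \/ exists2 i, j = i.+1 & (1 <= i < k)%N.
Proof. by case: j => [|[|j]] // /andP[_ lt_jk]; [left | right; exists j.+1]. Qed.

Section BilinearForm.
Variables (R : rcfType) (p : nat) (G : 'M[R]_p).
Implicit Types x y : 'cV[R]_p.

Lemma bformZl a x y : bform G (a *: x) y = a * bform G x y.
Proof. by rewrite /bform linearZ /= -!scalemxAl mxE. Qed.

Lemma bformZr a x y : bform G x (a *: y) = a * bform G x y.
Proof. by rewrite /bform -scalemxAr mxE. Qed.

Lemma bformNl x y : bform G (- x) y = - bform G x y.
Proof. by rewrite -scaleN1r bformZl mulN1r. Qed.

Lemma bformNr x y : bform G x (- y) = - bform G x y.
Proof. by rewrite -scaleN1r bformZr mulN1r. Qed.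

Lemma bformBr x y z : bform G x (y - z) = bform G x y - bform G x z.
Proof. by rewrite /bform mulmxBr !mxE. Qed.

Lemma bform_sumr (I : Type) (r : seq I) (P : pred I) (F : I -> 'cV[R]_p) x :
  bform G x (\sum_(i <- r | P i) F i) = \sum_(i <- r | P i) bform G x (F i).
Proof. by rewrite /bform mulmx_sumr summxE. Qed.

Lemma bform_tr x y : bform G^T x y = bform G y x.
Proof. by rewrite /bform -[y^T *m G *m x]trmxK [RHS]mxE !trmx_mul !trmxK mulmxA. Qed.

Lemma bformC x y : G^T = G -> bform G x y = bform G y x.
Proof. by move=> symG; rewrite -bform_tr symG. Qed.

Lemma posdef_bform_ge0 x : posdef G -> 0 <= bform G x x.
Proof.
move=> posG; have [->|nz_x] := eqVneq x 0; last exact/ltW/posG.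
by rewrite /bform mulmx0 mxE.
Qed.

Lemma posdef_unitmx : posdef G -> G \in unitmx.
Proof.
move=> posG; rewrite -row_free_unit -kermx_eq0; apply/eqP/row_matrixP => i.
rewrite row0; apply/eqP/contraT => nz_row; have := posG (row i (kermx G))^T.
by rewrite trmx_eq0 nz_row /bform trmxK -row_mul mulmx_ker row0 mul0mx mxE ltxx => /(_ isT).
Qed.

Lemma GnormN x : Gnorm G (- x) = Gnorm G x.
Proof. by rewrite /Gnorm bformNl bformNr opprK. Qed.

Lemma GnormZ a x : Gnorm G (a *: x) = `|a| * Gnorm G x.
Proof. by rewrite /Gnorm bformZl bformZr mulrA -expr2 sqrtrM ?sqr_ge0 ?sqrtr_sqr. Qed.

End BilinearForm.

Lemma bform_invmx_mul (R : rcfType) (p : nat) (N : 'M[R]_p) (x y : 'cV[R]_p) :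
  N^T = N -> N \in unitmx -> bform (invmx N) (N *m x) (N *m y) = bform N x y.
Proof. by move=> symN uN; rewrite /bform trmx_mul symN -mulmxA mulKmx // mulmxA. Qed.

Lemma Gnorm_invmx_mul (R : rcfType) (p : nat) (N : 'M[R]_p) (x : 'cV[R]_p) :
  N^T = N -> N \in unitmx -> Gnorm (invmx N) (N *m x) = Gnorm N x.
Proof. by move=> symN uN; rewrite /Gnorm bform_invmx_mul. Qed.

Section ColumnMatrices.
Variable R : rcfType.
Implicit Types (n k : nat).

Lemma mulmx_Qmat p n k (X : 'M[R]_(p, n)) (f : nat -> 'cV[R]_n) :
  X *m Qmat k f = Qmat k (fun j => X *m f j).
Proof. by apply/matrixP=> i j; rewrite !mxE; apply: eq_bigr => l _; rewrite mxE. Qed.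

Lemma eq_Qmat n k (f g : nat -> 'cV[R]_n) :
  (forall j, (1 <= j <= k)%N -> f j = g j) -> Qmat k f = Qmat k g.
Proof. by move=> fg; apply/matrixP=> i j; rewrite !mxE fg //; apply: ltn_ord. Qed.

Lemma Qmat_add n k (f g : nat -> 'cV[R]_n) :
  Qmat k f + Qmat k g = Qmat k (fun j => f j + g j).
Proof. by apply/matrixP=> i j; rewrite !mxE. Qed.

Lemma Qmat_mulmx n k (f : nat -> 'cV[R]_n) (x : 'cV[R]_k) :
  Qmat k f *m x = \sum_(j < k) x j 0 *: f j.+1.
Proof.
apply/matrixP=> i c; rewrite (ord1 c) !mxE summxE.
by apply: eq_bigr => j _; rewrite !mxE mulrC.
Qed.

Lemma trQmat_mul_Qmat n k (f g : nat -> 'cV[R]_n) :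
  (Qmat k f)^T *m Qmat k g = \matrix_(i, j) ((f i.+1)^T *m g j.+1) 0 0.
Proof. by apply/matrixP=> i j; rewrite !mxE; apply: eq_bigr => l _; rewrite !mxE. Qed.

Lemma trQmat_bform_Qmat n k (G : 'M[R]_n) (f g : nat -> 'cV[R]_n) :
  (Qmat k f)^T *m G *m Qmat k g = \matrix_(i, j) bform G (f i.+1) (g j.+1).
Proof.
rewrite -mulmxA mulmx_Qmat trQmat_mul_Qmat.
by apply/matrixP=> i j; rewrite [LHS]mxE [RHS]mxE /bform mulmxA.
Qed.

Lemma Qmat_mul_e1 n k (f : nat -> 'cV[R]_n) : (0 < k)%N -> Qmat k f *m e1 R k = f 1%N.
Proof.
move=> k_gt0; rewrite Qmat_mulmx (bigD1 (Ordinal k_gt0)) //= !mxE scale1r big1 ?addr0 // => j.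
by rewrite -val_eqE !mxE /= => /negbTE->; rewrite scale0r.
Qed.

Lemma Qmat_mulmx_last n k (u : 'cV[R]_n) (x : 'cV[R]_k) (c : R) : (0 < k)%N ->
  (forall j : 'I_k, j.+1 = k -> x j 0 = c) ->
  Qmat k (fun j => (j == k)%:R *: u) *m x = c *: u.
Proof.
move=> k_gt0 x_last; have lt_k'k : (k.-1 < k)%N by rewrite ltn_predL.
rewrite Qmat_mulmx (bigD1 (Ordinal lt_k'k)) //= prednK // eqxx scale1r x_last ?prednK //.
rewrite big1 ?addr0 // => j; rewrite -val_eqE /= => ne_jk.
rewrite (_ : j.+1 == k = false) ?scale0r ?scaler0 //.
by apply/negbTE; apply: contra ne_jk => /eqP e; apply/eqP; lia.
Qed.

Lemma Qmat_mulBmat n k (f : nat -> 'cV[R]_n) (alpha beta : nat -> R) :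
  Qmat k f *m Bmat k alpha beta =
  Qmat k (fun j => alpha j *: f j + (if (1 < j)%N then beta j *: f j.-1 else 0)).
Proof.
apply/matrixP=> i [[|j] lt_jk]; rewrite !mxE (bigD1 (Ordinal lt_jk)) //= !mxE eqxx.
  rewrite big1 => [|l]; first by rewrite !addr0 mulrC.
  by rewrite -val_eqE /= => nz_l; rewrite !mxE /= eq_sym (negbTE nz_l) mulr0.
rewrite (bigD1 (Ordinal (ltnW lt_jk))) /=; last by rewrite -val_eqE /= neq_ltn ltnSn.
rewrite !mxE /= eqxx gtn_eqF // big1 => [|l]; first by rewrite addr0 mulrC [_ * beta _]mulrC.
rewrite -!val_eqE /= => /andP[ne_lj ne_lj'].
by rewrite !mxE eq_sym (negbTE ne_lj) eq_sym eqSS (negbTE ne_lj') mulr0.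
Qed.

Lemma Qmat_mulHmat n k (f : nat -> 'cV[R]_n) (h : nat -> nat -> R) (beta : nat -> R) :
  Qmat k f *m Hmat k h beta =
  Qmat k (fun j => \sum_(1 <= i < j.+1) h j i *: f i +
                   (if (j < k)%N then beta j.+1 *: f j.+1 else 0)).
Proof.
apply/matrixP=> i j; rewrite [RHS]mxE.
transitivity (col j (Qmat k f *m Hmat k h beta) i 0); first by rewrite [RHS]mxE.
rewrite colE -mulmxA -colE Qmat_mulmx; apply: (congr1 (fun x : 'cV_n => x i 0)).
under eq_bigr => l _ do rewrite !mxE.
have -> : (if (j.+1 < k)%N then beta j.+2 *: f j.+2 else 0) =
          \sum_(l < k) (if l == j.+1 :> nat then beta j.+2 *: f l.+1 else 0).
  case: ltnP => [lt_jk | le_kj]; first by rewrite -big_mkcond (big_pred1 (Ordinal lt_jk)).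
  by rewrite big1 // => l _; rewrite ltn_eqF // (leq_trans (ltn_ord l) le_kj).
rewrite big_add1 big_mkord /= (big_ord_widen k (fun l => h j.+1 l.+1 *: f l.+1) (ltn_ord j)).
rewrite [X in X + _]big_mkcond -big_split /=; apply: eq_bigr => l _; rewrite ltnS.
case: leqP => [le_lj | lt_jl]; first by rewrite ltn_eqF ?addr0.
by rewrite add0r; case: eqP; rewrite ?scale0r.
Qed.

End ColumnMatrices.

Section BidiagonalFactor.
Variables (R : rcfType) (k : nat) (alpha beta : nat -> R).
Local Notation B := (Bmat k alpha beta).

Lemma Bmat_unitmx : (forall i : 'I_k, alpha i.+1 != 0) -> B \in unitmx.
Proof.
move=> nz_alpha; rewrite unitmxE -det_tr det_trig; last first.
  by apply/is_trig_mxP => i j lt_ij; rewrite !mxE ltn_eqF // ltn_eqF // ltnW.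
by rewrite unitfE; apply/prodf_neq0 => i _; rewrite !mxE eqxx.
Qed.

Lemma trBmat_mulmxE p (X : 'M[R]_(k, p)) (i : 'I_k) (j : 'I_p) :
  (B^T *m X) i j = alpha i.+1 * X i j + \sum_(l < k | l.+1 == i :> nat) beta i.+1 * X l j.
Proof.
rewrite mxE (bigD1 i) //= !mxE eqxx; congr (_ + _).
rewrite [RHS]big_mkcond [LHS]big_mkcond; apply: eq_bigr => l _; rewrite !mxE.
have [-> | ne_li] := eqVneq l i; first by rewrite eqxx gtn_eqF.
rewrite /= (negbTE (_ : (i : nat) != l)) 1?eq_sym //.
by case: eqP; rewrite ?mul0r // => _; rewrite mulrC.
Qed.

Lemma trBmat_mul_recurrence (x : nat -> R) (c : R) :
  alpha 1%N * x 1%N = c ->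
  (forall j, (1 <= j < k)%N -> alpha j.+1 * x j.+1 + beta j.+1 * x j = 0) ->
  B^T *m \col_(i < k) x i.+1 = c *: e1 R k.
Proof.
move=> x1 x_rec; apply/matrixP=> -[[|i] lt_ik] j; rewrite (ord1 j) trBmat_mulmxE !mxE /=.
  by rewrite big_pred0 // addr0 mulr1.
rewrite (big_pred1 (Ordinal (ltnW lt_ik))) => [|l]; last by rewrite /= eqSS.
by rewrite !mxE x_rec ?mulr0.
Qed.

Lemma trBmat_mul_triu (h : nat -> nat -> R) (K : 'M[R]_k) :
  (forall i : 'I_k, alpha i.+1 != 0) -> (forall i : 'I_k, K i i = 1) ->
  B^T *m K = Hmat k h beta -> forall i j : 'I_k, (j < i)%N -> K i j = 0.
Proof.
move=> nz_alpha K1 BK.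
have alphaK0 (i j : 'I_k) : alpha i.+1 * K i j = 0 -> K i j = 0.
  by move/eqP; rewrite mulf_eq0 (negbTE (nz_alpha i)) => /eqP.
suff K0 d (i j : 'I_k) : i = (j + d.+1)%N :> nat -> K i j = 0.
  by move=> i j lt_ji; apply: (K0 (i - j.+1)%N); lia.
elim: d i j => [|d IHd] i j e_ij; apply: alphaK0;
  have := congr1 (fun X : 'M_k => X i j) BK; rewrite /= trBmat_mulmxE mxE ifF;
  try by apply/negbTE; rewrite -ltnNge; lia.
  rewrite (big_pred1 j) => [|l /=]; last by rewrite e_ij addn1 eqSS.
  by rewrite e_ij addn1 eqxx K1 mulr1 => /(canRL (addrK _)); rewrite subrr.
have lt_i'k : (i.-1 < k)%N by rewrite (leq_ltn_trans (leq_pred i)).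
rewrite (big_pred1 (Ordinal lt_i'k)) => [|l /=]; last by rewrite -val_eqE /= e_ij addnS eqSS.
rewrite (IHd (Ordinal lt_i'k) j) /=; last by lia.
by rewrite ifF ?mulr0 ?addr0 //; apply/negbTE; lia.
Qed.

End BidiagonalFactor.

Section GramSchmidt.
Variables (R : rcfType) (n : nat) (N : 'M[R]_n).
Hypotheses (symN : N^T = N) (posN : posdef N).
Variables (q ghat g : nat -> 'cV[R]_n) (h : nat -> nat -> R) (beta : nat -> R) (k : nat).
Hypotheses
  (q1_unit : bform N (q 1%N) (q 1%N) = 1)
  (s_h : forall j i, (1 <= j <= k)%N -> (1 <= i <= j)%N -> h j i = bform N (q i) (ghat j))
  (s_g : forall j, (1 <= j <= k)%N -> g j = ghat j - \sum_(1 <= i < j.+1) h j i *: q i)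
  (s_beta : forall j, (1 <= j <= k)%N -> beta j.+1 = Gnorm N (g j))
  (s_nostop : forall j, (1 <= j < k)%N -> beta j.+1 != 0)
  (s_q : forall j, (1 <= j < k)%N -> q j.+1 = (beta j.+1)^-1 *: g j).

Definition orthonormal_upto j :=
  forall i l, (1 <= i <= j)%N -> (1 <= l <= j)%N -> bform N (q i) (q l) = (i == l)%:R.

Lemma orthonormal_upto_orth_g j :
  (1 <= j <= k)%N -> orthonormal_upto j -> forall i, (1 <= i <= j)%N -> bform N (q i) (g j) = 0.
Proof.
move=> le_jk orth_j i le_ij; rewrite s_g // bformBr bform_sumr.
rewrite (bigD1_seq i) ?mem_index_iota ?iota_uniq //= bformZr orth_j // eqxx mulr1.
rewrite big_seq_cond big1 ?addr0 ?s_h ?subrr // => l /andP[].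
rewrite mem_index_iota => le_lj ne_li.
by rewrite bformZr orth_j // eq_sym (negbTE ne_li) mulr0.
Qed.

Lemma gs_orthonormal j : (j <= k)%N -> orthonormal_upto j.
Proof.
elim: j => [_ i l ? ?|[|j] IHj le_jk i l le_i le_l]; first lia.
  by have [-> ->] : i = 1%N /\ l = 1%N by lia.
have orth_j := IHj (ltnW le_jk).
have lt_jk : (1 <= j.+1 < k)%N by [].
have g_perp := @orthonormal_upto_orth_g j.+1 (ltnW le_jk) orth_j.
have gg : bform N (g j.+1) (g j.+1) = beta j.+2 ^+ 2.
  by rewrite s_beta /Gnorm ?sqr_sqrtr ?posdef_bform_ge0 //; exact: ltnW.
have nz_beta := s_nostop lt_jk.
have [-> | ne_i] := eqVneq i j.+2; have [-> | ne_l] := eqVneq l j.+2.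
- by rewrite s_q // bformZl bformZr gg mulrA -expr2 -exprMn mulVf ?expr1n.
- by rewrite s_q // bformZl bformC // g_perp ?mulr0 1?eq_sym ?(negbTE ne_l) //; lia.
- by rewrite s_q // bformZr g_perp ?mulr0 ?(negbTE ne_i) //; lia.
- by apply: orth_j; lia.
Qed.

Lemma gs_orth_g i : (1 <= i <= k)%N -> bform N (q i) (g k) = 0.
Proof.
move=> le_ik; apply: orthonormal_upto_orth_g => //; last exact: gs_orthonormal.
by case/andP: le_ik => lt0i le_ik; rewrite leqnn (leq_trans lt0i).
Qed.

Lemma gs_arnoldi :
  Qmat k ghat = Qmat k q *m Hmat k h beta + Qmat k (fun j => (j == k)%:R *: g k).
Proof.
rewrite Qmat_mulHmat Qmat_add; apply: eq_Qmat => j le_jk.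
rewrite -[ghat j](subrK (\sum_(1 <= i < j.+1) h j i *: q i)) -s_g // addrC -addrA.
congr (_ + _); case: ltnP => [lt_jk | le_kj].
  by rewrite ltn_eqF // scale0r addr0 s_q ?scalerA ?mulfV ?scale1r ?s_nostop //; lia.
have -> : j = k by lia.
by rewrite eqxx scale1r add0r.
Qed.

Lemma gs_hessenberg : (Qmat k q)^T *m N *m Qmat k ghat = Hmat k h beta.
Proof.
rewrite gs_arnoldi mulmxDr mulmxA !trQmat_bform_Qmat.
have -> : \matrix_(i < k, j < k) bform N (q i.+1) (q j.+1) = 1%:M.
  by apply/matrixP=> i j; rewrite !mxE (gs_orthonormal (leqnn k)) //; apply: ltn_ord.
have -> : \matrix_(i < k, j < k) bform N (q i.+1) ((j.+1 == k)%:R *: g k) = 0.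
  by apply/matrixP=> i j; rewrite !mxE bformZr gs_orth_g ?mulr0 //; apply: ltn_ord.
by rewrite mul1mx addr0.
Qed.

End GramSchmidt.

Section UnitUpperTriangular.
Variables (R : rcfType) (k : nat) (K : 'M[R]_k).
Hypotheses (K1 : forall i : 'I_k, K i i = 1)
           (K0 : forall i j : 'I_k, (j < i)%N -> K i j = 0).

Lemma unit_triu_unitmx : K \in unitmx.
Proof.
rewrite unitmxE -det_tr det_trig; last by apply/is_trig_mxP => i j lt_ij; rewrite mxE K0.
by rewrite big1 ?unitr1 // => i _; rewrite mxE K1.
Qed.

Lemma unit_triu_mulmx_last (l : 'I_k) (x : 'cV[R]_k) :
  l.+1 = k -> (K *m x) l 0 = x l 0.
Proof.
move=> last_l; rewrite mxE (bigD1 l) //= K1 mul1r big1 ?addr0 // => j ne_jl.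
by rewrite K0 ?mul0r // ltn_neqAle ne_jl -ltnS last_l ltn_ord.
Qed.

End UnitUpperTriangular.

Section NonsymmetricCRAIG.
Variables (R : rcfType) (m n : nat).
Variables (M : 'M[R]_m) (A : 'M[R]_(m, n)) (C : 'M[R]_n) (b : 'cV[R]_n) (N : 'M[R]_n).
Hypotheses (hM : posdef M) (hCsym : C^T = C) (hC : possemidef C) (hb : b != 0)
           (hNsym : N^T = N) (hN : posdef N).
Variables (q r ghat g : nat -> 'cV[R]_n) (w v : nat -> 'cV[R]_m) (s t : nat -> 'cV[R]_n)
  (alpha beta chi : nat -> R) (h : nat -> nat -> R) (k : nat).
Hypotheses (hk : (1 <= k)%N)
  (i_beta : beta 1%N = Gnorm (invmx N) b)
  (i_q : q 1%N = (beta 1%N)^-1 *: (invmx N *m b))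
  (i_r : r 1%N = q 1%N)
  (i_w : w 1%N = invmx M *m A *m q 1%N)
  (i_s : s 1%N = C *m r 1%N)
  (i_alpha : alpha 1%N = Num.sqrt (bform M (w 1%N) (w 1%N) + ((r 1%N)^T *m s 1%N) ord0 ord0))
  (i_v : v 1%N = (alpha 1%N)^-1 *: w 1%N)
  (i_t : t 1%N = (alpha 1%N)^-1 *: s 1%N)
  (i_chi : chi 1%N = beta 1%N / alpha 1%N)
  (s_ghat : forall j, (1 <= j <= k)%N -> ghat j = invmx N *m (A^T *m v j + t j))
  (s_h : forall j i, (1 <= j <= k)%N -> (1 <= i <= j)%N ->
           h j i = bform N (q i) (ghat j))
  (s_g : forall j, (1 <= j <= k)%N ->
           g j = ghat j - \sum_(1 <= i < j.+1) h j i *: q i)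
  (s_beta : forall j, (1 <= j <= k)%N -> beta j.+1 = Gnorm N (g j))
  (s_nostop : forall j, (1 <= j < k)%N -> beta j.+1 != 0)
  (s_q : forall j, (1 <= j < k)%N -> q j.+1 = (beta j.+1)^-1 *: g j)
  (s_w : forall j, (1 <= j < k)%N -> w j.+1 = invmx M *m A *m q j.+1 - beta j.+1 *: v j)
  (s_r : forall j, (1 <= j < k)%N -> r j.+1 = q j.+1 - (beta j.+1 / alpha j) *: r j)
  (s_s : forall j, (1 <= j < k)%N -> s j.+1 = C *m r j.+1)
  (s_alpha : forall j, (1 <= j < k)%N ->
     alpha j.+1 = Num.sqrt (bform M (w j.+1) (w j.+1) + ((r j.+1)^T *m s j.+1) ord0 ord0))
  (s_v : forall j, (1 <= j < k)%N -> v j.+1 = (alpha j.+1)^-1 *: w j.+1)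
  (s_t : forall j, (1 <= j < k)%N -> t j.+1 = (alpha j.+1)^-1 *: s j.+1)
  (s_chi : forall j, (1 <= j < k)%N -> chi j.+1 = - (beta j.+1 / alpha j.+1) * chi j)
  (s_alpha0 : forall j, (1 <= j <= k)%N -> alpha j != 0).

Local Notation Q := (Qmat k q).
Local Notation V := (Qmat k v).
Local Notation T := (Qmat k t).
Local Notation P := (Qmat k (fun j => (alpha j)^-1 *: r j)).
Local Notation B := (Bmat k alpha beta).
Local Notation H := (Hmat k h beta).
Local Notation K := (V^T *m M^T *m V + T^T *m P).

Lemma craig_s j : (1 <= j <= k)%N -> s j = C *m r j.
Proof. by case/range1_cases=> [-> | [i -> lt_ik]]; [exact: i_s | exact: s_s]. Qed.

Lemma craig_v j : (1 <= j <= k)%N -> v j = (alpha j)^-1 *: w j.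
Proof. by case/range1_cases=> [-> | [i -> lt_ik]]; [exact: i_v | exact: s_v]. Qed.

Lemma craig_t j : (1 <= j <= k)%N -> t j = (alpha j)^-1 *: s j.
Proof. by case/range1_cases=> [-> | [i -> lt_ik]]; [exact: i_t | exact: s_t]. Qed.

Lemma craig_alpha_sqr j : (1 <= j <= k)%N ->
  alpha j ^+ 2 = bform M (w j) (w j) + bform C (r j) (r j).
Proof.
move=> le_jk; have -> : alpha j = Num.sqrt (bform M (w j) (w j) + ((r j)^T *m s j) 0 0).
  by case/range1_cases: le_jk => [-> | [i -> lt_ik]]; [exact: i_alpha | exact: s_alpha].
rewrite craig_s // mulmxA sqr_sqrtr // addr_ge0 ?(posdef_bform_ge0 _ hM) //; exact: hC.
Qed.

Lemma craig_beta1_gt0 : 0 < beta 1%N.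
Proof.
rewrite i_beta sqrtr_gt0 -[b](mulKVmx (posdef_unitmx hN)) bform_invmx_mul ?posdef_unitmx //.
by apply: hN; apply: contraNneq hb => Nb0; rewrite -[b](mulKVmx (posdef_unitmx hN)) Nb0 mulmx0.
Qed.

Lemma craig_q1_unit : bform N (q 1%N) (q 1%N) = 1.
Proof.
have uN := posdef_unitmx hN.
have nz_beta1 : beta 1%N != 0 by rewrite gt_eqF ?craig_beta1_gt0.
have NqNq : bform N (invmx N *m b) (invmx N *m b) = beta 1%N ^+ 2.
  rewrite -bform_invmx_mul ?mulKVmx // i_beta sqr_sqrtr //.
  by rewrite -[b](mulKVmx uN) bform_invmx_mul // posdef_bform_ge0.
by rewrite i_q bformZl bformZr NqNq mulrA -expr2 -exprMn mulVf ?expr1n.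
Qed.

Lemma craig_invMAQ : invmx M *m A *m Q = V *m B.
Proof.
rewrite mulmx_Qmat Qmat_mulBmat; apply: eq_Qmat => j le_jk.
rewrite craig_v // scalerA mulfV ?s_alpha0 // scale1r.
case/range1_cases: le_jk => [-> | [i -> lt_ik]]; first by rewrite i_w addr0.
by case/andP: (lt_ik) => i_gt0 _; rewrite ifT // s_w // subrK.
Qed.

Lemma craig_CQ : C *m Q = T *m B.
Proof.
rewrite mulmx_Qmat Qmat_mulBmat; apply: eq_Qmat => j le_jk.
rewrite craig_t // scalerA mulfV ?s_alpha0 // scale1r.
case/range1_cases: le_jk => [-> | [i -> lt_ik]]; first by rewrite -i_r i_s addr0.
case/andP: (lt_ik) => i_gt0 _; rewrite ifT //.
rewrite -[q i.+1](subrK ((beta i.+1 / alpha i) *: r i)) -s_r // mulmxDr -scalemxAr /=.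
by rewrite -!craig_s ?craig_t ?scalerA //; lia.
Qed.

Lemma craig_T_CP : T = C *m P.
Proof.
by rewrite mulmx_Qmat; apply: eq_Qmat => j le_jk; rewrite craig_t // craig_s // scalemxAr.
Qed.

Lemma craig_AtV_addT : A^T *m V + T = N *m Qmat k ghat.
Proof.
rewrite !mulmx_Qmat Qmat_add; apply: eq_Qmat => j le_jk.
by rewrite s_ghat // mulKVmx // posdef_unitmx.
Qed.

Lemma craig_H : H = B^T *m K.
Proof.
have AQ : A *m Q = M *m (V *m B).
  by rewrite -craig_invMAQ -!mulmxA mulKVmx // posdef_unitmx.
have QtAtV : Q^T *m A^T *m V = B^T *m (V^T *m M^T *m V).
  by rewrite -trmx_mul AQ !trmx_mul !mulmxA.
have QtT : Q^T *m T = B^T *m (T^T *m P).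
  by rewrite {1}craig_T_CP mulmxA -{1}hCsym -trmx_mul craig_CQ trmx_mul mulmxA.
rewrite -(gs_hessenberg hNsym hN craig_q1_unit s_h s_g s_beta s_nostop s_q).
by rewrite -mulmxA -craig_AtV_addT mulmxDr mulmxA QtAtV QtT -mulmxDr.
Qed.

Lemma craig_K_diag (i : 'I_k) : K i i = 1.
Proof.
have le_ik : (1 <= i.+1 <= k)%N by exact: ltn_ord.
rewrite mxE trQmat_bform_Qmat trQmat_mul_Qmat [X in X + _]mxE [X in _ + X]mxE bform_tr.
rewrite craig_v // craig_t // craig_s // bformZl bformZr [(_ *: _)^T]linearZ /=.
rewrite -scalemxAl -scalemxAr scalerA mxE trmx_mul hCsym -/(bform C _ _) mulrA -mulrDr.
by rewrite -craig_alpha_sqr // -expr2 -exprMn mulVf ?expr1n ?s_alpha0.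
Qed.

Lemma craig_alpha_neq0 (i : 'I_k) : alpha i.+1 != 0.
Proof. by apply: s_alpha0; apply: ltn_ord. Qed.

Lemma craig_K_triu (i j : 'I_k) : (j < i)%N -> K i j = 0.
Proof. exact: trBmat_mul_triu craig_alpha_neq0 craig_K_diag (esym craig_H) i j. Qed.

Lemma craig_H_unitmx : H \in unitmx.
Proof.
rewrite craig_H unitmx_mul unitmx_tr Bmat_unitmx; last exact: craig_alpha_neq0.
exact: unit_triu_unitmx craig_K_diag craig_K_triu.
Qed.

Lemma craig_trB_chi : B^T *m \col_(i < k) chi i.+1 = beta 1%N *: e1 R k.
Proof.
apply: trBmat_mul_recurrence => [|j lt_jk]; first by rewrite i_chi mulrC divfK ?s_alpha0.
have nz_alpha : alpha j.+1 != 0 by apply: s_alpha0; lia.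
by rewrite s_chi //; field.
Qed.

Lemma craig_z_last (l : 'I_k) : l.+1 = k ->
  (invmx H *m (beta 1%N *: e1 R k)) l 0 = chi k.
Proof.
move=> last_l; set z := invmx H *m _.
have uBt : B^T \in unitmx by rewrite unitmx_tr; apply: Bmat_unitmx craig_alpha_neq0.
have Kz : K *m z = \col_(i < k) chi i.+1.
  apply: (can_inj (mulKmx uBt)); rewrite mulmxA -craig_H craig_trB_chi.
  by rewrite mulKVmx ?craig_H_unitmx.
by rewrite -(unit_triu_mulmx_last craig_K_diag craig_K_triu _ last_l) Kz mxE last_l.
Qed.

Lemma craig_orth_g i : (1 <= i <= k)%N -> bform N (q i) (g k) = 0.
Proof.
exact: (@gs_orth_g _ _ _ hNsym hN _ _ _ _ _ _ craig_q1_unit s_h s_g s_beta s_nostop s_q i).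
Qed.

Lemma craig_residual :
  let p := Q *m - (invmx B *m invmx H *m (beta 1%N *: e1 R k)) in
  b - A^T *m - (invmx M *m A *m p) + C *m p = - (chi k *: (N *m g k)).
Proof.
move=> p; set z := invmx H *m (beta 1%N *: e1 R k).
have uB : B \in unitmx by apply: Bmat_unitmx craig_alpha_neq0.
have Hz : H *m z = beta 1%N *: e1 R k by rewrite mulKVmx ?craig_H_unitmx.
have By : B *m - (invmx B *m invmx H *m (beta 1%N *: e1 R k)) = - z.
  by rewrite mulmxN -!mulmxA mulKVmx.
have MAp : invmx M *m A *m p = - (V *m z).
  by rewrite /p mulmxA craig_invMAQ -[V *m B *m _]mulmxA By mulmxN.
have Cp : C *m p = - (T *m z) by rewrite /p mulmxA craig_CQ -[T *m B *m _]mulmxA By mulmxN.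
have Wz : (A^T *m V + T) *m z = b + chi k *: (N *m g k).
  rewrite craig_AtV_addT (gs_arnoldi s_g s_nostop s_q) -mulmxA mulmxDl -mulmxA Hz.
  rewrite -scalemxAr Qmat_mul_e1 // (Qmat_mulmx_last _ hk craig_z_last) i_q scalerA.
  rewrite mulfV ?gt_eqF ?craig_beta1_gt0 // scale1r mulmxDr mulKVmx ?posdef_unitmx //.
  by rewrite -scalemxAr.
by rewrite MAp Cp opprK mulmxA -addrA -opprD -mulmxDl Wz opprD addrA subrr add0r.
Qed.

End NonsymmetricCRAIG.

Theorem mainTheorem8 (R : rcfType) (m n : nat)
  (M : 'M[R]_m) (A : 'M[R]_(m, n)) (C : 'M[R]_n) (b : 'cV[R]_n) (N : 'M[R]_n)
  (hnm : (n <= m)%N)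
  (hM : posdef M)
  (hA : \rank A = n)
  (hCsym : C^T = C) (hC : possemidef C)
  (hb : b != 0)
  (hNsym : N^T = N) (hN : posdef N)
  (q r ghat g : nat -> 'cV[R]_n) (w v : nat -> 'cV[R]_m) (s t : nat -> 'cV[R]_n)
  (alpha beta chi : nat -> R) (h : nat -> nat -> R)
  (k : nat) (hk : (1 <= k)%N)
  (i_beta : beta 1%N = Gnorm (invmx N) b)
  (i_q : q 1%N = (beta 1%N)^-1 *: (invmx N *m b))
  (i_r : r 1%N = q 1%N)
  (i_w : w 1%N = invmx M *m A *m q 1%N)
  (i_s : s 1%N = C *m r 1%N)
  (i_alpha : alpha 1%N = Num.sqrt (bform M (w 1%N) (w 1%N) + ((r 1%N)^T *m s 1%N) ord0 ord0))
  (i_v : v 1%N = (alpha 1%N)^-1 *: w 1%N)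
  (i_t : t 1%N = (alpha 1%N)^-1 *: s 1%N)
  (i_chi : chi 1%N = beta 1%N / alpha 1%N)
  (s_ghat : forall j, (1 <= j <= k)%N -> ghat j = invmx N *m (A^T *m v j + t j))
  (s_h : forall j i, (1 <= j <= k)%N -> (1 <= i <= j)%N ->
           h j i = bform N (q i) (ghat j))
  (s_g : forall j, (1 <= j <= k)%N ->
           g j = ghat j - \sum_(1 <= i < j.+1) h j i *: q i)
  (s_beta : forall j, (1 <= j <= k)%N -> beta j.+1 = Gnorm N (g j))
  (s_nostop : forall j, (1 <= j < k)%N -> beta j.+1 != 0)
  (s_q : forall j, (1 <= j < k)%N -> q j.+1 = (beta j.+1)^-1 *: g j)
  (s_w : forall j, (1 <= j < k)%N -> w j.+1 = invmx M *m A *m q j.+1 - beta j.+1 *: v j)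
  (s_r : forall j, (1 <= j < k)%N -> r j.+1 = q j.+1 - (beta j.+1 / alpha j) *: r j)
  (s_s : forall j, (1 <= j < k)%N -> s j.+1 = C *m r j.+1)
  (s_alpha : forall j, (1 <= j < k)%N ->
     alpha j.+1 = Num.sqrt (bform M (w j.+1) (w j.+1) + ((r j.+1)^T *m s j.+1) ord0 ord0))
  (s_v : forall j, (1 <= j < k)%N -> v j.+1 = (alpha j.+1)^-1 *: w j.+1)
  (s_t : forall j, (1 <= j < k)%N -> t j.+1 = (alpha j.+1)^-1 *: s j.+1)
  (s_chi : forall j, (1 <= j < k)%N -> chi j.+1 = - (beta j.+1 / alpha j.+1) * chi j)
  (s_alpha0 : forall j, (1 <= j <= k)%N -> alpha j != 0) :
  let y := - (invmx (Bmat k alpha beta) *m invmx (Hmat k h beta) *m (beta 1%N *: e1 R k)) in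
  let p := Qmat k q *m y in
  let u := - (invmx M *m A *m p) in
  let res := b - A^T *m u + C *m p in
  M *m u + A *m p = 0 /\
  res = - (chi k *: (N *m g k)) /\
  (0 < beta k.+1 -> res = - ((chi k * beta k.+1) *: (N *m ((beta k.+1)^-1 *: g k)))) /\
  (forall i, (1 <= i <= k)%N -> ((q i)^T *m res) ord0 ord0 = 0) /\
  Gnorm (invmx N) res = beta k.+1 * `|chi k| /\
  Gnorm (invmx N) res / Gnorm (invmx N) b = beta k.+1 * `|chi k| / beta 1%N.
Proof.
move=> y p u res.
have resE : res = - (chi k *: (N *m g k)) by apply: craig_residual; eassumption.
have res_norm : Gnorm (invmx N) res = beta k.+1 * `|chi k|.
  rewrite resE GnormN GnormZ Gnorm_invmx_mul ?posdef_unitmx // -s_beta 1?mulrC //.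
  by rewrite hk leqnn.
split; first by rewrite /u mulmxN !mulmxA mulmxV ?posdef_unitmx // mul1mx addNr.
split; first exact: resE.
split; first by move=> beta_gt0; rewrite resE -scalemxAr scalerA mulfK ?gt_eqF.
split.
  move=> i le_ik; have orth_g : bform N (q i) (g k) = 0 by apply: craig_orth_g; eassumption.
  have -> : ((q i)^T *m res) 0 0 = bform 1%:M (q i) res by rewrite /bform mulmx1.
  by rewrite resE bformNr bformZr /bform mulmx1 mulmxA -/(bform N _ _) orth_g mulr0 oppr0.
split; first exact: res_norm.
by rewrite res_norm -i_beta.
Qed.
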